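(* For odd $n\ge5$, let $\bar P_n$ denote the maximum of $\bar P(\mathsf{M}^{(1)},\mathsf{M}^{(2)})$ over all pairs of dichotomic measurements on the regular $n$-gon state space $\mathcal{S}_n$, and let $r_{2n}^2=\sec(\pi/(2n))$. Then, for every integer $m\ge1$: (i) if $n=4m+1$, $\bar P_n=\frac14\big[2+\cos(m\pi/n)+\sec(\tfrac{\pi}{2n})\sin(m\pi/n)\big]$; (ii) if $n=4m+3$, $\bar P_n=\frac14\big[2+\cos((m+1)\pi/n)+\sec(\tfrac{\pi}{2n})\sin((m+1)\pi/n)\big]$.
   Context: The regular $n$-gon state space $\mathcal{S}_n\subset\mathbb{R}^3$ is the convex hull of $s_j=(r_n\cos(2j\pi/n),\,r_n\sin(2j\pi/n),\,1)^T$, $j=1,\ldots,n$, with $r_n=\sqrt{\sec(\pi/n)}$. Effects are linear functionals $e$ on $\mathbb{R}^3$ with $0\le e\le1$ on $\mathcal{S}_n$; unit effect $u=(0,0,1)$; $\|f\|=\max_{s\in\mathcal{S}_n}|f(s)|$. A dichotomic measurement is a pair of effects $\mathsf{M}_+,\mathsf{M}_-$ with $\mathsf{M}_++\mathsf{M}_-=u$, and $\bar P(\mathsf{M}^{(1)},\mathsf{M}^{(2)})=\frac18\sum_{x,y\in\{+,-\}}\|\mathsf{M}^{(1)}_x+\mathsf{M}^{(2)}_y\|$. *)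

From Stdlib Require Import Reals Lra.
From Coquelicot Require Import Coquelicot.
Open Scope R_scope.

(* Points of R^3 and linear functionals on R^3 (identified with vectors via the dot product). *)
Definition vec3 : Type := (R * R * R)%type.

Definition dot (f x : vec3) : R :=
  let '(f1, f2, f3) := f in let '(x1, x2, x3) := x in f1 * x1 + f2 * x2 + f3 * x3.

Definition vadd (f g : vec3) : vec3 :=
  let '(f1, f2, f3) := f in let '(g1, g2, g3) := g in (f1 + g1, f2 + g2, f3 + g3).

Definition rn (n : nat) : R := sqrt (/ cos (PI / INR n)).

Definition vertex (n j : nat) : vec3 :=
  (rn n * cos (2 * INR j * PI / INR n), rn n * sin (2 * INR j * PI / INR n), 1).

Definition in_Sn (n : nat) (x : vec3) : Prop :=
  exists lam : nat -> R,
    (forall k, 0 <= lam k) /\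
    sum_f_R0 lam (n - 1) = 1 /\
    x = (sum_f_R0 (fun k => lam k * fst (fst (vertex n (S k)))) (n - 1),
         sum_f_R0 (fun k => lam k * snd (fst (vertex n (S k)))) (n - 1),
         sum_f_R0 (fun k => lam k * snd (vertex n (S k))) (n - 1)).

Definition fnorm (n : nat) (f : vec3) : R :=
  real (Lub_Rbar (fun y => exists s, in_Sn n s /\ y = Rabs (dot f s))).

Definition unit_effect : vec3 := (0, 0, 1).

Definition is_effect (n : nat) (e : vec3) : Prop :=
  forall s, in_Sn n s -> 0 <= dot e s <= 1.

Definition dichotomic (n : nat) (Mp Mm : vec3) : Prop :=
  is_effect n Mp /\ is_effect n Mm /\ vadd Mp Mm = unit_effect.

Definition Pbar (n : nat) (M1p M1m M2p M2m : vec3) : R :=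
  / 8 * (fnorm n (vadd M1p M2p) + fnorm n (vadd M1p M2m)
         + fnorm n (vadd M1m M2p) + fnorm n (vadd M1m M2m)).

Definition is_max_Pbar (n : nat) (V : R) : Prop :=
  (exists M1p M1m M2p M2m, dichotomic n M1p M1m /\ dichotomic n M2p M2m /\
      Pbar n M1p M1m M2p M2m = V) /\
  (forall M1p M1m M2p M2m, dichotomic n M1p M1m -> dichotomic n M2p M2m ->
      Pbar n M1p M1m M2p M2m <= V).

From Stdlib Require Import Reals.
From Coquelicot Require Import Coquelicot.
From Stdlib Require Import Lra Lia ZArith.
Open Scope R_scope.

(* Write n = 2h + 1 and theta = PI / (2 n); the vertex s_a sits at angle 4 a theta.  For
   M1 = (e, u - e) and M2 = (f, u - f) each norm in 8 Pbar is the value at some vertex of a sum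
   of two effects, so 8 Pbar = 4 + (e + f)(s_i) - (e + f)(s_j) + (e - f)(s_k) - (e - f)(s_l).
   Comparing the values of an effect at two almost opposite vertices confines its linear part
   to the regular 2n-gon with vertices (kappa / r_n) (cos 2q theta, sin 2q theta), where
   kappa = 1 / (1 + cos 2 theta), so e and f may be replaced by two such vertices q and q'.
   Sum-to-product turns the result into 2 cos ((q - q') theta) C + 2 sin ((q - q') theta) S,
   where C and S are differences of cosines and sines of grid angles, bounded because
   cos (N theta) <= cos theta for odd N.  It remains to maximise |cos x| + |sin x| / cos theta
   over x in 2 theta Z, which happens at x = 2 m theta.  The two effects whose linear parts
   are the polygon vertices at angles 2 m theta and -2 m theta attain the bound. *)

Ltac push_IZR :=
  repeat progress rewrite ?plus_IZR, ?minus_IZR, ?mult_IZR, ?opp_IZR, <- ?INR_IZR_INZ.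

Lemma cos_period_Z x q : cos (x + 2 * IZR q * PI) = cos x.
Proof.
  destruct (Z.le_ge_cases 0 q).
  - rewrite <- (Z2Nat.id q), <- INR_IZR_INZ by lia. apply cos_period.
  - rewrite <- (cos_period (x + 2 * IZR q * PI) (Z.to_nat (- q))).
    rewrite INR_IZR_INZ, Z2Nat.id, opp_IZR by lia. f_equal; ring.
Qed.

Lemma sin_period_Z x q : sin (x + 2 * IZR q * PI) = sin x.
Proof.
  destruct (Z.le_ge_cases 0 q).
  - rewrite <- (Z2Nat.id q), <- INR_IZR_INZ by lia. apply sin_period.
  - rewrite <- (sin_period (x + 2 * IZR q * PI) (Z.to_nat (- q))).
    rewrite INR_IZR_INZ, Z2Nat.id, opp_IZR by lia. f_equal; ring.
Qed.

Lemma cos_sub_PI x : cos (x - PI) = - cos x.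
Proof. rewrite <- cos_neg, Ropp_minus_distr. apply Rtrigo_facts.cos_pi_minus. Qed.

Lemma sin_sub_PI2 x : sin x = cos (x - PI / 2).
Proof. rewrite <- cos_neg, Ropp_minus_distr. symmetry. apply cos_shift. Qed.

Lemma opp_sin_add_PI2 x : - sin x = cos (x + PI / 2).
Proof. rewrite <- sin_neg, sin_sub_PI2, <- cos_neg. f_equal. ring. Qed.

Lemma sin_sub_mul_cos_add b t X :
  sin (b - t) * cos X + sin t * cos (X + b) = sin b * cos (X + t).
Proof. rewrite sin_minus, !cos_plus. ring. Qed.

Lemma sin_sub_mul_sin_add b t X :
  sin (b - t) * sin X + sin t * sin (X + b) = sin b * sin (X + t).
Proof. rewrite sin_minus, !sin_plus. ring. Qed.

Lemma sin_add_sin_sub_mul b t :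
  (sin (b - t) + sin t) * (1 + cos b) = sin b * (cos t + cos (b - t)).
Proof.
  rewrite sin_minus, cos_minus. pose proof (sin2_cos2 b) as Hpyth. unfold Rsqr in Hpyth.
  transitivity (sin b * (cos t + cos b * cos t)
                + sin t * (1 - (sin b * sin b + cos b * cos b)) + sin b * sin b * sin t);
    [ring | rewrite Hpyth; ring].
Qed.

Lemma cos_add_cos_sub2 A Q Q' :
  cos (A - 2 * Q) + cos (A - 2 * Q') = 2 * cos (Q - Q') * cos (A - (Q + Q')).
Proof.
  rewrite form1, <- cos_neg.
  replace (- ((A - 2 * Q - (A - 2 * Q')) / 2)) with (Q - Q') by field.
  replace ((A - 2 * Q + (A - 2 * Q')) / 2) with (A - (Q + Q')) by field. ring.
Qed.

Lemma cos_sub_cos_sub2 A Q Q' :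
  cos (A - 2 * Q) - cos (A - 2 * Q') = 2 * sin (Q - Q') * sin (A - (Q + Q')).
Proof.
  rewrite form2.
  replace ((A - 2 * Q - (A - 2 * Q')) / 2) with (- (Q - Q')) by field.
  replace ((A - 2 * Q + (A - 2 * Q')) / 2) with (A - (Q + Q')) by field.
  rewrite sin_neg. ring.
Qed.

Definition alt_sum (xi xj xk xl P : R) : R :=
  cos (xi - P) - cos (xj - P) + cos (xk - P) - cos (xl - P).

Lemma alt_sum_pair xi xj xk xl Q Q' :
  alt_sum xi xj xk xl (2 * Q) + alt_sum xi xj xl xk (2 * Q') =
  2 * cos (Q - Q') * (cos (xi - (Q + Q')) - cos (xj - (Q + Q')))
  + 2 * sin (Q - Q') * (sin (xk - (Q + Q')) - sin (xl - (Q + Q'))).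
Proof.
  unfold alt_sum.
  pose proof (cos_add_cos_sub2 xi Q Q'). pose proof (cos_add_cos_sub2 xj Q Q').
  pose proof (cos_sub_cos_sub2 xk Q Q'). pose proof (cos_sub_cos_sub2 xl Q Q').
  lra.
Qed.

Lemma alt_sum_cos_sin xi xj xk xl P :
  alt_sum xi xj xk xl P =
  (cos xi - cos xj + cos xk - cos xl) * cos P + (sin xi - sin xj + sin xk - sin xl) * sin P.
Proof. unfold alt_sum. rewrite !cos_minus. ring. Qed.

Lemma cos_add_sin_div_sub c x y : c <> 0 ->
  (cos y + sin y / c) - (cos x + sin x / c) =
  2 * sin ((y - x) / 2) * (cos ((x + y) / 2) / c - sin ((x + y) / 2)).
Proof.
  intros Hc.
  replace (cos y + sin y / c - (cos x + sin x / c)) with ((cos y - cos x) + (sin y - sin x) / c)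
    by (field; exact Hc).
  rewrite form2, form4, (Rplus_comm y x). field. exact Hc.
Qed.

Lemma sin_le_cos x : 0 <= x <= PI / 4 -> sin x <= cos x.
Proof.
  intros Hx. pose proof PI_RGT_0. rewrite <- cos_shift.
  apply cos_decr_1; lra.
Qed.

Lemma sin_le_cos_div c x : 0 < c <= 1 -> 0 <= x <= PI / 4 -> sin x <= cos x / c.
Proof.
  intros Hc Hx. pose proof PI_RGT_0. pose proof (sin_le_cos x Hx).
  assert (0 <= cos x) by (apply cos_ge_0; lra).
  apply (Rmult_le_reg_r c); [lra|].
  replace (cos x / c * c) with (cos x) by (field; lra). nra.
Qed.

Lemma cos_div_cos2_le_sin y x : 0 <= y < PI / 4 -> PI / 4 + y <= x <= PI / 2 ->
  cos x / cos (2 * y) <= sin x.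
Proof.
  intros Hy Hx. pose proof PI_RGT_0.
  assert (H45 : cos (PI / 4 + y) <= cos (2 * y) * sin (PI / 4 + y)).
  { rewrite cos_plus, sin_plus, <- sin_cos_PI4, cos_2a.
    pose proof (sin_le_cos y ltac:(lra)).
    assert (0 <= sin y) by (apply sin_ge_0; lra).
    assert (0 < sin (PI / 4)) by (apply sin_gt_0; lra).
    pose proof (sin2_cos2 y) as Hpyth. unfold Rsqr in Hpyth.
    set (k := sin (PI / 4)) in *. set (c := cos y) in *. set (s := sin y) in *.
    assert (E : (c * c - s * s) * (k * c + k * s) - (k * c - k * s)
                = k * (c - s) * (2 * s * c) + k * (c - s) * (s * s + c * c - 1)) by ring.
    rewrite Hpyth in E.
    assert (0 <= k * (c - s) * (2 * s * c)) by (apply Rmult_le_pos; nra).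
    lra. }
  assert (0 < cos (2 * y)) by (apply cos_gt_0; lra).
  assert (cos x <= cos (PI / 4 + y)) by (apply cos_decr_1; lra).
  assert (sin (PI / 4 + y) <= sin x) by (apply sin_incr_1; lra).
  apply (Rmult_le_reg_r (cos (2 * y))); [lra|].
  replace (cos x / cos (2 * y) * cos (2 * y)) with (cos x) by (field; lra). nra.
Qed.

Lemma cos_mult_le_cos_step (K : nat) (r : R) :
  1 <= INR K -> 1 <= r <= INR K -> cos (r * (PI / INR K)) <= cos (PI / INR K).
Proof.
  intros HK Hr. pose proof PI_RGT_0.
  assert (Hstep : 0 < PI / INR K) by (apply Rdiv_lt_0_compat; lra).
  assert (Hmax : INR K * (PI / INR K) = PI) by (field; lra).
  apply cos_decr_1; try lra; nra.
Qed.

Lemma cos_grid_le (K : nat) (N : Z) : (1 <= K)%nat ->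
  (N mod (2 * Z.of_nat K) <> 0)%Z -> cos (IZR N * (PI / INR K)) <= cos (PI / INR K).
Proof.
  intros HK HN.
  assert (HKr : 1 <= INR K) by (apply (le_INR 1); lia).
  pose proof (Z.div_mod N (2 * Z.of_nat K) ltac:(lia)) as Hdm.
  pose proof (Z.mod_pos_bound N (2 * Z.of_nat K) ltac:(lia)) as Hb.
  set (q := (N / (2 * Z.of_nat K))%Z) in *. set (r := (N mod (2 * Z.of_nat K))%Z) in *.
  assert (Hr : IZR N * (PI / INR K) = IZR r * (PI / INR K) + 2 * IZR q * PI).
  { rewrite Hdm. push_IZR. field. lra. }
  rewrite Hr, cos_period_Z.
  destruct (Z_le_gt_dec r (Z.of_nat K)).
  - apply cos_mult_le_cos_step; auto. rewrite INR_IZR_INZ.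
    split; apply IZR_le; lia.
  - replace (IZR r * (PI / INR K)) with (- (IZR (2 * Z.of_nat K - r) * (PI / INR K)) + 2 * 1 * PI)
      by (push_IZR; field; lra).
    rewrite (cos_period_Z _ 1), cos_neg. apply cos_mult_le_cos_step; auto. rewrite INR_IZR_INZ.
    split; apply IZR_le; lia.
Qed.

Lemma polar_coordinates x y : exists rho phi, 0 <= rho /\ x = rho * cos phi /\ y = rho * sin phi.
Proof.
  set (rho := sqrt (x * x + y * y)).
  assert (Hr : 0 <= rho) by apply sqrt_pos.
  assert (Hr2 : rho * rho = x * x + y * y) by (apply sqrt_sqrt; nra).
  clearbody rho.
  destruct (Req_dec rho 0) as [E | E].
  - exists 0, 0. subst rho. split; [lra|]. split; nra.
  - assert (Hrho : 0 < rho) by lra.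
    set (u := x / rho).
    assert (Hu : -1 <= u <= 1).
    { unfold u. split; apply (Rmult_le_reg_r rho); try lra;
        replace (x / rho * rho) with x by (field; lra); nra. }
    assert (Hs : sqrt (1 - u²) = Rabs y / rho).
    { replace (1 - u²) with ((Rabs y / rho)²).
      - apply sqrt_Rsqr. apply Rdiv_le_0_compat; [apply Rabs_pos | lra].
      - assert (Hyy : Rabs y * Rabs y = y * y) by (rewrite <- Rabs_mult; apply Rabs_pos_eq; nra).
        unfold u, Rsqr.
        replace (Rabs y / rho * (Rabs y / rho)) with (y * y / (rho * rho))
          by (rewrite <- Hyy; field; lra).
        replace (x / rho * (x / rho)) with (x * x / (rho * rho)) by (field; lra).
        rewrite Hr2. field. nra. }
    destruct (Rle_dec 0 y).
    + exists rho, (acos u). rewrite cos_acos, sin_acos, Hs, Rabs_pos_eq by auto.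
      unfold u. repeat split; [lra | field; lra | field; lra].
    + exists rho, (- acos u).
      rewrite cos_neg, sin_neg, cos_acos, sin_acos, Hs, Rabs_left by (auto || lra).
      unfold u. repeat split; [lra | field; lra | field; lra].
Qed.

Lemma angle_reduce W phi : 0 < W -> exists p tau, phi = IZR p * W + tau /\ 0 <= tau < W.
Proof.
  intros HW. exists (Zfloor (phi / W)), (phi - IZR (Zfloor (phi / W)) * W).
  pose proof (Zfloor_bound (phi / W)).
  assert (phi = phi / W * W) by (field; lra).
  split; [ring | nra].
Qed.

Lemma convex_comb_le la mu X1 X2 : 0 <= la -> 0 <= mu -> la + mu <= 1 ->
  la * X1 + mu * X2 <= Rmax (Rabs X1) X2.
Proof.
  intros Hla Hmu Hsum.
  pose proof (Rle_abs X1). pose proof (Rabs_pos X1).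
  pose proof (Rmax_l (Rabs X1) X2). pose proof (Rmax_r (Rabs X1) X2).
  nra.
Qed.

Lemma scaled_pair_le k c s X Y BX BY : 0 <= k -> - BX <= X <= BX -> - BY <= Y <= BY ->
  k * (2 * c * X + 2 * s * Y) <= 2 * (Rabs c * (k * BX) + Rabs s * (k * BY)).
Proof.
  intros Hk HX HY.
  assert (Hc : c * X <= Rabs c * BX).
  { destruct (Rle_dec 0 c); [rewrite Rabs_pos_eq | rewrite Rabs_left]; nra. }
  assert (Hs : s * Y <= Rabs s * BY).
  { destruct (Rle_dec 0 s); [rewrite Rabs_pos_eq | rewrite Rabs_left]; nra. }
  nra.
Qed.

(** * Vertex values, effects and norms *)

(* The finest angle of the argument: the vertices of the state space lie at the multiples of
   [4 theta], those of the polygon of linear parts of effects at the multiples of [2 theta]. *)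
Definition theta (n : nat) : R := PI / (2 * INR n).

Definition vertex_value (n : nat) (g : vec3) (a : Z) : R :=
  let '(g1, g2, g3) := g in
  rn n * (g1 * cos (IZR (4 * a) * theta n) + g2 * sin (IZR (4 * a) * theta n)) + g3.

Definition complement (g : vec3) : vec3 := let '(g1, g2, g3) := g in (- g1, - g2, 1 - g3).

Lemma PI_theta n : (1 <= n)%nat -> PI = 2 * INR n * theta n.
Proof.
  intros Hn. assert (1 <= INR n) by (apply (le_INR 1); lia).
  unfold theta. field. lra.
Qed.

Lemma dot_vertex n g k : (1 <= n)%nat -> dot g (vertex n k) = vertex_value n g (Z.of_nat k).
Proof.
  intros Hn. assert (1 <= INR n) by (apply (le_INR 1); lia).
  destruct g as [[g1 g2] g3]. unfold dot, vertex, vertex_value, theta.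
  replace (IZR (4 * Z.of_nat k) * (PI / (2 * INR n))) with (2 * INR k * PI / INR n)
    by (push_IZR; field; lra).
  ring.
Qed.

Lemma vertex_value_vadd n g g' a :
  vertex_value n (vadd g g') a = vertex_value n g a + vertex_value n g' a.
Proof. destruct g as [[g1 g2] g3], g' as [[g1' g2'] g3']. simpl. ring. Qed.

Lemma vertex_value_complement n g a : vertex_value n (complement g) a = 1 - vertex_value n g a.
Proof. destruct g as [[g1 g2] g3]. simpl. ring. Qed.

Lemma vadd_complement g : vadd g (complement g) = unit_effect.
Proof.
  destruct g as [[g1 g2] g3]. unfold vadd, complement, unit_effect. f_equal; [f_equal|]; ring.
Qed.

Lemma vertex_value_periodic n g a q : (1 <= n)%nat ->
  vertex_value n g (a + Z.of_nat n * q) = vertex_value n g a.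
Proof.
  intros Hn. destruct g as [[g1 g2] g3]. unfold vertex_value.
  replace (IZR (4 * (a + Z.of_nat n * q)) * theta n) with (IZR (4 * a) * theta n + 2 * IZR q * PI)
    by (rewrite (PI_theta n Hn); push_IZR; ring).
  rewrite cos_period_Z, sin_period_Z. reflexivity.
Qed.

Lemma vertex_value_reduce n g a : (1 <= n)%nat ->
  exists k, (k < n)%nat /\ vertex_value n g a = vertex_value n g (Z.of_nat (S k)).
Proof.
  intros Hn.
  pose proof (Z.div_mod a (Z.of_nat n) ltac:(lia)) as Hdm.
  pose proof (Z.mod_pos_bound a (Z.of_nat n) ltac:(lia)) as Hb.
  set (q := (a / Z.of_nat n)%Z) in *. set (r := (a mod Z.of_nat n)%Z) in *.
  destruct (Z.eq_dec r 0) as [Hr | Hr].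
  - exists (n - 1)%nat. split; [lia |].
    rewrite Hdm, <- (vertex_value_periodic n g (Z.of_nat (S (n - 1))) (q - 1) Hn).
    f_equal. lia.
  - exists (Z.to_nat r - 1)%nat. split; [lia |].
    rewrite Hdm, <- (vertex_value_periodic n g (Z.of_nat (S (Z.to_nat r - 1))) q Hn).
    f_equal. lia.
Qed.

Lemma dot_triple g1 g2 g3 v : dot (g1, g2, g3) v = g1 * fst (fst v) + g2 * snd (fst v) + g3 * snd v.
Proof. destruct v as [[x y] z]. reflexivity. Qed.

Lemma sum_f_R0_linear3 (lam a b c : nat -> R) g1 g2 g3 N :
  sum_f_R0 (fun k => lam k * (g1 * a k + g2 * b k + g3 * c k)) N =
  g1 * sum_f_R0 (fun k => lam k * a k) N + g2 * sum_f_R0 (fun k => lam k * b k) N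
  + g3 * sum_f_R0 (fun k => lam k * c k) N.
Proof. induction N as [|N IH]; simpl; [|rewrite IH]; ring. Qed.

Lemma dot_in_Sn_bounds n g s lo hi : (1 <= n)%nat -> in_Sn n s ->
  (forall k, (k < n)%nat -> lo <= dot g (vertex n (S k)) <= hi) -> lo <= dot g s <= hi.
Proof.
  intros Hn [lam [Hlam [Hsum ->]]] Hv.
  destruct g as [[g1 g2] g3].
  rewrite dot_triple. cbn [fst snd]. rewrite <- sum_f_R0_linear3.
  rewrite (sum_eq _ (fun k => lam k * dot (g1, g2, g3) (vertex n (S k))))
    by (intros; rewrite dot_triple; reflexivity).
  split.
  - replace lo with (sum_f_R0 (fun k => lam k * lo) (n - 1))
      by (rewrite <- scal_sum, Hsum; ring).
    apply sum_Rle. intros k Hk. apply Rmult_le_compat_l; [apply Hlam | apply Hv; lia].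
  - replace hi with (sum_f_R0 (fun k => lam k * hi) (n - 1))
      by (rewrite <- scal_sum, Hsum; ring).
    apply sum_Rle. intros k Hk. apply Rmult_le_compat_l; [apply Hlam | apply Hv; lia].
Qed.

Lemma sum_f_R0_indicator (a : nat -> R) k N :
  sum_f_R0 (fun j => (if Nat.eqb j k then 1 else 0) * a j) N = if Nat.leb k N then a k else 0.
Proof.
  induction N as [|N IH].
  - simpl. destruct k; simpl; ring.
  - rewrite tech5, IH.
    destruct (Nat.leb k N) eqn:E1, (Nat.eqb (S N) k) eqn:E2, (Nat.leb k (S N)) eqn:E3;
      rewrite ?Nat.eqb_eq, ?Nat.eqb_neq, ?Nat.leb_le, ?Nat.leb_gt in *;
      try subst k; try ring; lia.
Qed.

Lemma vertex_in_Sn n k : (k < n)%nat -> in_Sn n (vertex n (S k)).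
Proof.
  intros Hk. exists (fun j => if Nat.eqb j k then 1 else 0).
  assert (Hkn : Nat.leb k (n - 1) = true) by (apply Nat.leb_le; lia).
  split; [|split].
  - intros j. destruct (Nat.eqb j k); lra.
  - rewrite (sum_eq _ (fun j => (if Nat.eqb j k then 1 else 0) * 1))
      by (intros; ring).
    rewrite sum_f_R0_indicator, Hkn. reflexivity.
  - rewrite !sum_f_R0_indicator, Hkn. destruct (vertex n (S k)) as [[x y] z]. reflexivity.
Qed.

Lemma is_effect_iff n e : (1 <= n)%nat ->
  is_effect n e <-> forall a, 0 <= vertex_value n e a <= 1.
Proof.
  intros Hn. split.
  - intros He a. destruct (vertex_value_reduce n e a Hn) as [k [Hk ->]].
    rewrite <- dot_vertex by exact Hn. apply He, vertex_in_Sn, Hk.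
  - intros Hv s Hs. apply (dot_in_Sn_bounds n e s 0 1 Hn Hs).
    intros k _. rewrite dot_vertex by exact Hn. apply Hv.
Qed.

Lemma fnorm_eq n g B : (1 <= n)%nat ->
  (forall a, Rabs (vertex_value n g a) <= B) -> (exists a, Rabs (vertex_value n g a) = B) ->
  fnorm n g = B.
Proof.
  intros Hn Hle [a0 Ha0]. unfold fnorm.
  replace (Lub_Rbar _) with (Finite B); [reflexivity|].
  symmetry. apply is_lub_Rbar_unique. split.
  - intros y [s [Hs ->]]. simpl. apply Rabs_le_between.
    apply (dot_in_Sn_bounds n g s (- B) B Hn Hs). intros k _.
    rewrite dot_vertex by exact Hn. apply Rabs_le_between, Hle.
  - intros b Hub. apply Hub.
    destruct (vertex_value_reduce n g a0 Hn) as [k [Hk Hred]].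
    exists (vertex n (S k)). split; [apply vertex_in_Sn, Hk|].
    rewrite dot_vertex, <- Hred by exact Hn. symmetry. exact Ha0.
Qed.

Lemma finite_argmax (F : nat -> R) N :
  exists k, (k <= N)%nat /\ forall k', (k' <= N)%nat -> F k' <= F k.
Proof.
  induction N as [|N [k [Hk Hmax]]].
  - exists 0%nat. split; [lia|]. intros k' Hk'. replace k' with 0%nat by lia. lra.
  - destruct (Rle_dec (F (S N)) (F k)).
    + exists k. split; [lia|]. intros k' Hk'.
      destruct (Nat.eq_dec k' (S N)); [subst; auto | apply Hmax; lia].
    + exists (S N). split; [lia|]. intros k' Hk'.
      destruct (Nat.eq_dec k' (S N)); [subst; lra|].
      pose proof (Hmax k' ltac:(lia)). lra.
Qed.

Lemma fnorm_attained n g : (1 <= n)%nat -> exists a, fnorm n g = Rabs (vertex_value n g a).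
Proof.
  intros Hn.
  destruct (finite_argmax (fun k => Rabs (vertex_value n g (Z.of_nat (S k)))) (n - 1))
    as [k [Hk Hmax]].
  exists (Z.of_nat (S k)). apply fnorm_eq; [exact Hn | | eauto].
  intros a. destruct (vertex_value_reduce n g a Hn) as [k' [Hk' ->]]. apply Hmax. lia.
Qed.

Lemma fnorm_vadd_effects n e f : (1 <= n)%nat ->
  (forall a, 0 <= vertex_value n e a <= 1) -> (forall a, 0 <= vertex_value n f a <= 1) ->
  exists a, fnorm n (vadd e f) = vertex_value n e a + vertex_value n f a.
Proof.
  intros Hn He Hf. destruct (fnorm_attained n (vadd e f) Hn) as [a Ha].
  exists a. rewrite Ha, vertex_value_vadd. pose proof (He a). pose proof (Hf a).
  apply Rabs_pos_eq. lra.
Qed.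

Lemma fnorm_vadd_effects_eq n e f B : (1 <= n)%nat ->
  (forall a, 0 <= vertex_value n e a <= 1) -> (forall a, 0 <= vertex_value n f a <= 1) ->
  (forall a, vertex_value n e a + vertex_value n f a <= B) ->
  (exists a, vertex_value n e a + vertex_value n f a = B) -> fnorm n (vadd e f) = B.
Proof.
  intros Hn He Hf Hle [a0 Ha0].
  assert (Habs : forall a,
            Rabs (vertex_value n (vadd e f) a) = vertex_value n e a + vertex_value n f a).
  { intros a. rewrite vertex_value_vadd. pose proof (He a). pose proof (Hf a).
    apply Rabs_pos_eq. lra. }
  apply fnorm_eq; [exact Hn | intros a; rewrite Habs; apply Hle |].
  exists a0. rewrite Habs. exact Ha0.
Qed.

Lemma complement_bounds n g : (forall a, 0 <= vertex_value n g a <= 1) ->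
  forall a, 0 <= vertex_value n (complement g) a <= 1.
Proof. intros Hg a. rewrite vertex_value_complement. pose proof (Hg a). lra. Qed.

Lemma dichotomic_complement n g : (1 <= n)%nat ->
  (forall a, 0 <= vertex_value n g a <= 1) -> dichotomic n g (complement g).
Proof.
  intros Hn Hg. split; [|split; [|apply vadd_complement]]; apply is_effect_iff; try exact Hn.
  - exact Hg.
  - apply complement_bounds, Hg.
Qed.

Lemma dichotomic_value n Mp Mm a : dichotomic n Mp Mm ->
  vertex_value n Mm a = 1 - vertex_value n Mp a.
Proof.
  intros [_ [_ Hsum]].
  assert (Hu : vertex_value n unit_effect a = 1) by (simpl; ring).
  rewrite <- Hu, <- Hsum, vertex_value_vadd. ring.
Qed.

(** * The angle grid *)

Lemma Z_odd_mod_double_neq0 (N m : Z) : Z.odd N = true -> (0 < m)%Z -> (N mod (2 * m) <> 0)%Z.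
Proof.
  intros HN Hm E. apply Z.mod_divide in E; [|lia]. destruct E as [c ->].
  rewrite Z.mul_comm, <- Z.mul_assoc, Z.odd_mul in HN. discriminate.
Qed.

Lemma cos_odd_mult_le n N : (1 <= n)%nat -> Z.odd N = true ->
  cos (IZR N * theta n) <= cos (theta n).
Proof.
  intros Hn HN. unfold theta. rewrite <- (mult_INR 2).
  apply cos_grid_le; [lia|]. apply Z_odd_mod_double_neq0; [exact HN | lia].
Qed.

Lemma cos_twice_odd_mult_le n N : (1 <= n)%nat -> Z.odd N = true ->
  cos (IZR (2 * N) * theta n) <= cos (2 * theta n).
Proof.
  intros Hn HN. assert (1 <= INR n) by (apply (le_INR 1); lia).
  unfold theta.
  replace (IZR (2 * N) * (PI / (2 * INR n))) with (IZR N * (PI / INR n)) by (push_IZR; field; lra).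
  replace (2 * (PI / (2 * INR n))) with (PI / INR n) by (field; lra).
  apply cos_grid_le; [exact Hn|]. apply Z_odd_mod_double_neq0; [exact HN | lia].
Qed.

Lemma cos_add_cos_le n A B : (1 <= n)%nat -> Z.odd (A + B) = true ->
  cos (IZR (2 * A) * theta n) + cos (IZR (2 * B) * theta n) <= 1 + cos (2 * theta n).
Proof.
  intros Hn HAB. rewrite Z.odd_add in HAB.
  destruct (Z.odd A) eqn:HA.
  - pose proof (cos_twice_odd_mult_le n A Hn HA). pose proof (COS_bound (IZR (2 * B) * theta n)).
    lra.
  - destruct (Z.odd B) eqn:HB; [|discriminate].
    pose proof (cos_twice_odd_mult_le n B Hn HB). pose proof (COS_bound (IZR (2 * A) * theta n)).
    lra.
Qed.

Definition kappa (n : nat) : R := / (1 + cos (2 * theta n)).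

(* The theorem's value at [x = m PI / n] is [/ 4 * (2 + balance n x)]. *)
Definition balance (n : nat) (x : R) : R := Rabs (cos x) + Rabs (sin x) / cos (theta n).

Lemma balance_add_PI_mult n x q : balance n (x + IZR q * PI) = balance n x.
Proof.
  unfold balance. destruct (Z.Even_or_Odd q) as [[a ->] | [a ->]].
  - replace (x + IZR (2 * a) * PI) with (x + 2 * IZR a * PI) by (push_IZR; ring).
    rewrite cos_period_Z, sin_period_Z. reflexivity.
  - replace (x + IZR (2 * a + 1) * PI) with ((x + PI) + 2 * IZR a * PI) by (push_IZR; ring).
    rewrite cos_period_Z, sin_period_Z, neg_cos, neg_sin, !Rabs_Ropp. reflexivity.
Qed.

Lemma balance_PI_sub n x : balance n (PI - x) = balance n x.
Proof. unfold balance. rewrite Rtrigo_facts.cos_pi_minus, sin_PI_x, Rabs_Ropp. reflexivity. Qed.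

Lemma balance_first_quadrant n x : 0 <= x <= PI / 2 ->
  balance n x = cos x + sin x / cos (theta n).
Proof.
  intros Hx. pose proof PI_RGT_0. unfold balance.
  rewrite (Rabs_pos_eq (cos x)) by (apply cos_ge_0; lra).
  rewrite (Rabs_pos_eq (sin x)) by (apply sin_ge_0; lra). reflexivity.
Qed.

(** * Odd polygons *)

Section OddPolygon.
Variable h : nat.
Hypothesis h_pos : (1 <= h)%nat.
Local Notation n := (2 * h + 1)%nat.

Lemma PI_theta_odd : PI = (4 * INR h + 2) * theta n.
Proof. rewrite (PI_theta n) at 1 by lia. rewrite plus_INR, mult_INR. simpl. ring. Qed.

Lemma theta_bounds : 0 < theta n <= PI / 6.
Proof.
  pose proof PI_theta_odd. pose proof PI_RGT_0.
  assert (1 <= INR h) by (apply (le_INR 1); exact h_pos).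
  split; nra.
Qed.

Lemma cos_theta_pos : 0 < cos (theta n).
Proof. pose proof theta_bounds. apply cos_gt_0; lra. Qed.

Lemma cos_2theta_pos : 0 < cos (2 * theta n).
Proof. pose proof theta_bounds. apply cos_gt_0; lra. Qed.

Lemma rn_pos : 0 < rn n.
Proof.
  unfold rn. apply sqrt_lt_R0, Rinv_0_lt_compat.
  replace (PI / INR n) with (2 * theta n) by (unfold theta; field; apply not_0_INR; lia).
  exact cos_2theta_pos.
Qed.

Lemma kappa_pos : 0 < kappa n.
Proof. pose proof cos_2theta_pos. unfold kappa. apply Rinv_0_lt_compat. lra. Qed.

Lemma kappa_mul : kappa n * (1 + cos (2 * theta n)) = 1.
Proof. pose proof cos_2theta_pos. unfold kappa. field. lra. Qed.

Lemma kappa_mul_cos : kappa n * (2 * cos (theta n)) = / cos (theta n).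
Proof.
  pose proof cos_theta_pos. unfold kappa. rewrite cos_2a_cos. field. nra.
Qed.

Lemma opp_cos_vertex_le a : - cos (IZR (4 * a) * theta n) <= cos (2 * theta n).
Proof.
  rewrite <- cos_sub_PI.
  replace (IZR (4 * a) * theta n - PI) with (IZR (2 * (2 * (a - Z.of_nat h) - 1)) * theta n)
    by (rewrite PI_theta_odd; push_IZR; ring).
  apply cos_twice_odd_mult_le; [lia|]. rewrite Z.odd_sub, Z.odd_mul. reflexivity.
Qed.

Lemma sin_vertex_le a : sin (IZR (4 * a) * theta n) <= cos (theta n).
Proof.
  rewrite sin_sub_PI2.
  replace (IZR (4 * a) * theta n - PI / 2) with (IZR (2 * (2 * a - Z.of_nat h) - 1) * theta n)
    by (rewrite PI_theta_odd; push_IZR; field).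
  apply cos_odd_mult_le; [lia|]. rewrite Z.odd_sub, Z.odd_mul. reflexivity.
Qed.

Lemma opp_sin_vertex_le a : - sin (IZR (4 * a) * theta n) <= cos (theta n).
Proof.
  rewrite <- sin_neg.
  replace (- (IZR (4 * a) * theta n)) with (IZR (4 * - a) * theta n) by (push_IZR; ring).
  apply sin_vertex_le.
Qed.

Lemma cos_diff_le_even s a b :
  cos (IZR (4 * a) * theta n - IZR (2 * s) * theta n)
  - cos (IZR (4 * b) * theta n - IZR (2 * s) * theta n) <= 1 + cos (2 * theta n).
Proof.
  set (B := (2 * b - s - 2 * Z.of_nat h - 1)%Z).
  assert (Ha : cos (IZR (4 * a) * theta n - IZR (2 * s) * theta n)
               = cos (IZR (2 * (2 * a - s)) * theta n)) by (f_equal; push_IZR; ring).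
  assert (Hb : - cos (IZR (4 * b) * theta n - IZR (2 * s) * theta n) = cos (IZR (2 * B) * theta n))
    by (rewrite <- cos_sub_PI; f_equal; unfold B; rewrite PI_theta_odd; push_IZR; ring).
  assert (Hodd : Z.odd (2 * a - s + B) = true).
  { unfold B. rewrite Z.odd_add, !Z.odd_sub, !Z.odd_mul. destruct (Z.odd s); reflexivity. }
  pose proof (cos_add_cos_le n _ _ ltac:(lia) Hodd). lra.
Qed.

Lemma cos_diff_le_odd s a b :
  cos (IZR (4 * a) * theta n - IZR (2 * s + 1) * theta n)
  - cos (IZR (4 * b) * theta n - IZR (2 * s + 1) * theta n) <= 2 * cos (theta n).
Proof.
  set (A := (4 * a - 2 * s - 1)%Z). set (B := (4 * b - 2 * s - 4 * Z.of_nat h - 3)%Z).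
  assert (Ha : cos (IZR (4 * a) * theta n - IZR (2 * s + 1) * theta n) = cos (IZR A * theta n))
    by (f_equal; unfold A; push_IZR; ring).
  assert (Hb : - cos (IZR (4 * b) * theta n - IZR (2 * s + 1) * theta n) = cos (IZR B * theta n))
    by (rewrite <- cos_sub_PI; f_equal; unfold B; rewrite PI_theta_odd; push_IZR; ring).
  assert (HA : Z.odd A = true) by (unfold A; rewrite !Z.odd_sub, !Z.odd_mul; reflexivity).
  assert (HB : Z.odd B = true) by (unfold B; rewrite !Z.odd_sub, !Z.odd_mul; reflexivity).
  pose proof (cos_odd_mult_le n A ltac:(lia) HA). pose proof (cos_odd_mult_le n B ltac:(lia) HB).
  lra.
Qed.

Lemma sin_diff_le_even s a b :
  sin (IZR (4 * a) * theta n - IZR (2 * s) * theta n)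
  - sin (IZR (4 * b) * theta n - IZR (2 * s) * theta n) <= 2 * cos (theta n).
Proof.
  set (A := (4 * a - 2 * s - 2 * Z.of_nat h - 1)%Z).
  set (B := (4 * b - 2 * s + 2 * Z.of_nat h + 1)%Z).
  assert (Ha : sin (IZR (4 * a) * theta n - IZR (2 * s) * theta n) = cos (IZR A * theta n))
    by (rewrite sin_sub_PI2; f_equal; unfold A; rewrite PI_theta_odd; push_IZR; field).
  assert (Hb : - sin (IZR (4 * b) * theta n - IZR (2 * s) * theta n) = cos (IZR B * theta n))
    by (rewrite opp_sin_add_PI2; f_equal; unfold B; rewrite PI_theta_odd; push_IZR; field).
  assert (HA : Z.odd A = true) by (unfold A; rewrite !Z.odd_sub, !Z.odd_mul; reflexivity).
  assert (HB : Z.odd B = true)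
    by (unfold B; rewrite !Z.odd_add, !Z.odd_sub, !Z.odd_mul; reflexivity).
  pose proof (cos_odd_mult_le n A ltac:(lia) HA). pose proof (cos_odd_mult_le n B ltac:(lia) HB).
  lra.
Qed.

Lemma sin_diff_le_odd s a b :
  sin (IZR (4 * a) * theta n - IZR (2 * s + 1) * theta n)
  - sin (IZR (4 * b) * theta n - IZR (2 * s + 1) * theta n) <= 1 + cos (2 * theta n).
Proof.
  set (A := (2 * a - s - Z.of_nat h - 1)%Z). set (B := (2 * b - s + Z.of_nat h)%Z).
  assert (Ha : sin (IZR (4 * a) * theta n - IZR (2 * s + 1) * theta n)
               = cos (IZR (2 * A) * theta n))
    by (rewrite sin_sub_PI2; f_equal; unfold A; rewrite PI_theta_odd; push_IZR; field).
  assert (Hb : - sin (IZR (4 * b) * theta n - IZR (2 * s + 1) * theta n)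
               = cos (IZR (2 * B) * theta n))
    by (rewrite opp_sin_add_PI2; f_equal; unfold B; rewrite PI_theta_odd; push_IZR; field).
  assert (Hodd : Z.odd (A + B) = true).
  { unfold A, B. replace (2 * a - s - Z.of_nat h - 1 + (2 * b - s + Z.of_nat h))%Z
      with (2 * (a + b - s - 1) + 1)%Z by ring.
    rewrite Z.odd_add, Z.odd_mul. reflexivity. }
  pose proof (cos_add_cos_le n _ _ ltac:(lia) Hodd). lra.
Qed.

Lemma effect_width e1 e2 e3 rho p tau :
  (forall a, 0 <= vertex_value n (e1, e2, e3) a <= 1) ->
  e1 = rho * cos (IZR (2 * p) * theta n + tau) -> e2 = rho * sin (IZR (2 * p) * theta n + tau) ->
  rn n * rho * (cos tau + cos (2 * theta n - tau)) <= 1.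
Proof.
  intros He E1 E2.
  assert (Hdiff : forall a b, vertex_value n (e1, e2, e3) a - vertex_value n (e1, e2, e3) b
    = rn n * rho * (cos (IZR (4 * a) * theta n - (IZR (2 * p) * theta n + tau))
                    - cos (IZR (4 * b) * theta n - (IZR (2 * p) * theta n + tau)))).
  { intros a b. unfold vertex_value. rewrite E1, E2, !cos_minus. ring. }
  (* two vertices at angles [-tau] (or [2 theta - tau]) and [2 theta - tau - PI] (or [-tau - PI])
     from the direction of [(e1, e2)] *)
  destruct (Z.Even_or_Odd p) as [[a ->] | [a ->]].
  - pose proof (Hdiff a (a - Z.of_nat h)%Z) as D.
    replace (IZR (4 * a) * theta n - (IZR (2 * (2 * a)) * theta n + tau)) with (- tau) in D
      by (push_IZR; ring).
    replace (IZR (4 * (a - Z.of_nat h)) * theta n - (IZR (2 * (2 * a)) * theta n + tau))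
      with ((2 * theta n - tau) - PI) in D by (rewrite PI_theta_odd; push_IZR; ring).
    rewrite cos_neg, cos_sub_PI in D.
    pose proof (He a). pose proof (He (a - Z.of_nat h)%Z). lra.
  - pose proof (Hdiff (a + 1)%Z (a - Z.of_nat h)%Z) as D.
    replace (IZR (4 * (a + 1)) * theta n - (IZR (2 * (2 * a + 1)) * theta n + tau))
      with (2 * theta n - tau) in D by (push_IZR; ring).
    replace (IZR (4 * (a - Z.of_nat h)) * theta n - (IZR (2 * (2 * a + 1)) * theta n + tau))
      with (- (tau + PI)) in D by (rewrite PI_theta_odd; push_IZR; ring).
    rewrite cos_neg, neg_cos in D.
    pose proof (He (a + 1)%Z). pose proof (He (a - Z.of_nat h)%Z). lra.
Qed.

Lemma effect_in_polygon e1 e2 e3 :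
  (forall a, 0 <= vertex_value n (e1, e2, e3) a <= 1) ->
  exists p la mu, 0 <= la /\ 0 <= mu /\ la + mu <= 1 /\
    rn n * e1 = kappa n * (la * cos (IZR (2 * p) * theta n)
                           + mu * cos (IZR (2 * p) * theta n + 2 * theta n)) /\
    rn n * e2 = kappa n * (la * sin (IZR (2 * p) * theta n)
                           + mu * sin (IZR (2 * p) * theta n + 2 * theta n)).
Proof.
  intros He.
  destruct (polar_coordinates e1 e2) as [rho [phi [Hrho [E1 E2]]]].
  pose proof theta_bounds. pose proof PI_RGT_0. pose proof rn_pos. pose proof kappa_pos.
  pose proof cos_2theta_pos.
  destruct (angle_reduce (2 * theta n) phi ltac:(lra)) as [p [tau [Hphi Htau]]].
  replace (IZR p * (2 * theta n)) with (IZR (2 * p) * theta n) in Hphi by (push_IZR; ring).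
  rewrite Hphi in E1, E2.
  pose proof (effect_width e1 e2 e3 rho p tau He E1 E2) as Hwidth.
  assert (Hs2 : 0 < sin (2 * theta n)) by (apply sin_gt_0; lra).
  set (c := rn n * rho / (kappa n * sin (2 * theta n))).
  assert (Hc : 0 <= c) by (apply Rdiv_le_0_compat; [|apply Rmult_lt_0_compat]; nra).
  assert (Hkc : kappa n * c * sin (2 * theta n) = rn n * rho) by (unfold c; field; lra).
  exists p, (c * sin (2 * theta n - tau)), (c * sin tau).
  assert (0 <= sin tau) by (apply sin_ge_0; lra).
  assert (0 <= sin (2 * theta n - tau)) by (apply sin_ge_0; lra).
  repeat split; try (apply Rmult_le_pos; lra).
  - pose proof (sin_add_sin_sub_mul (2 * theta n) tau) as Hid.
    pose proof kappa_mul as Hk.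
    (* [kappa] normalises the width [cos tau + cos (2 theta - tau)] exactly to [la + mu] *)
    assert (c * sin (2 * theta n - tau) + c * sin tau
            = rn n * rho * (cos tau + cos (2 * theta n - tau))).
    { unfold c. apply (Rmult_eq_reg_r (1 + cos (2 * theta n))); [|lra].
      rewrite <- Rmult_plus_distr_l, Rmult_assoc, Hid. unfold kappa. field. split; lra. }
    lra.
  - rewrite E1.
    transitivity (kappa n * c * (sin (2 * theta n) * cos (IZR (2 * p) * theta n + tau)));
      [rewrite <- Rmult_assoc, <- Hkc; ring|].
    rewrite <- sin_sub_mul_cos_add. ring.
  - rewrite E2.
    transitivity (kappa n * c * (sin (2 * theta n) * sin (IZR (2 * p) * theta n + tau)));
      [rewrite <- Rmult_assoc, <- Hkc; ring|].
    rewrite <- sin_sub_mul_sin_add. ring.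
Qed.

Lemma effect_pairing_le e1 e2 e3 x y :
  (forall a, 0 <= vertex_value n (e1, e2, e3) a <= 1) ->
  exists q, rn n * (e1 * x + e2 * y)
            <= kappa n * (x * cos (IZR (2 * q) * theta n) + y * sin (IZR (2 * q) * theta n)).
Proof.
  intros He.
  destruct (effect_in_polygon e1 e2 e3 He) as [p [la [mu [Hla [Hmu [Hsum [E1 E2]]]]]]].
  set (X := fun q => x * cos (IZR (2 * q) * theta n) + y * sin (IZR (2 * q) * theta n)).
  assert (Hantipode : X (p + Z.of_nat n)%Z = - X p).
  { unfold X. replace (IZR (2 * (p + Z.of_nat n)) * theta n) with (IZR (2 * p) * theta n + PI)
      by (rewrite (PI_theta n) by lia; push_IZR; ring).
    rewrite neg_cos, neg_sin. ring. }
  assert (Hlin : rn n * (e1 * x + e2 * y) = kappa n * (la * X p + mu * X (p + 1)%Z)).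
  { transitivity ((rn n * e1) * x + (rn n * e2) * y); [ring|]. rewrite E1, E2. unfold X.
    replace (IZR (2 * (p + 1)) * theta n) with (IZR (2 * p) * theta n + 2 * theta n)
      by (push_IZR; ring).
    ring. }
  pose proof (convex_comb_le la mu (X p) (X (p + 1)%Z) Hla Hmu Hsum) as Hconv.
  pose proof kappa_pos.
  rewrite Hlin. unfold Rmax in Hconv.
  destruct (Rle_dec (Rabs (X p)) (X (p + 1)%Z)) as [Hnext | Habs].
  - exists (p + 1)%Z. fold (X (p + 1)%Z). apply Rmult_le_compat_l; lra.
  - destruct (Rle_dec 0 (X p)) as [Hpos | Hneg].
    + exists p. fold (X p). rewrite Rabs_pos_eq in Hconv by lra. apply Rmult_le_compat_l; lra.
    + exists (p + Z.of_nat n)%Z. rewrite Rabs_left in Hconv by lra.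
      fold (X (p + Z.of_nat n)%Z). rewrite Hantipode. apply Rmult_le_compat_l; lra.
Qed.

(* [n = 4 m + 1] or [n = 4 m - 1]; the optimum sits at the angle [2 m theta = m PI / n]. *)
Variable m : nat.
Hypothesis m_spec : (h = 2 * m \/ h + 1 = 2 * m)%nat.
Local Notation optimal_angle := (2 * INR m * theta n).

Lemma m_bounds : INR h <= 2 * INR m <= INR h + 1.
Proof.
  replace (2 * INR m) with (INR (2 * m)) by (rewrite mult_INR; reflexivity).
  rewrite <- S_INR. split; apply le_INR; lia.
Qed.

Lemma balance_grid_le (t : nat) : (t <= h)%nat ->
  balance n (2 * INR t * theta n) <= balance n optimal_angle.
Proof.
  intros Ht.
  pose proof theta_bounds as Hth. pose proof PI_theta_odd as HPI. pose proof PI_RGT_0.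
  pose proof cos_theta_pos as Hc. pose proof (COS_bound (theta n)).
  pose proof m_bounds. pose proof (pos_INR m). pose proof (pos_INR t).
  assert (HtR : INR t <= INR h) by (apply le_INR; exact Ht).
  assert (1 <= INR h) by (apply (le_INR 1); exact h_pos).
  rewrite !balance_first_quadrant by nra.
  apply Rge_le, Rminus_ge, Rle_ge. rewrite cos_add_sin_div_sub by lra.
  replace ((2 * INR m * theta n - 2 * INR t * theta n) / 2) with ((INR m - INR t) * theta n)
    by field.
  replace ((2 * INR t * theta n + 2 * INR m * theta n) / 2) with ((INR m + INR t) * theta n)
    by field.
  set (M := (INR m + INR t) * theta n).
  destruct (Nat.lt_total t m) as [Hlt | [-> | Hgt]].
  - (* below the optimum both factors are nonnegative, since [M <= PI / 4] *)
    assert (INR t + 1 <= INR m) by (rewrite <- S_INR; apply le_INR; exact Hlt).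
    assert (0 <= sin ((INR m - INR t) * theta n)) by (apply sin_ge_0; nra).
    pose proof (sin_le_cos_div (cos (theta n)) M ltac:(lra) ltac:(unfold M; split; nra)).
    apply Rmult_le_pos; lra.
  - rewrite Rminus_diag, Rmult_0_l, sin_0. lra.
  - (* above it both factors are nonpositive, since [PI / 4 + theta / 2 <= M <= PI / 2] *)
    assert (INR m + 1 <= INR t) by (rewrite <- S_INR; apply le_INR; exact Hgt).
    assert (sin ((INR m - INR t) * theta n) <= 0).
    { replace ((INR m - INR t) * theta n) with (- ((INR t - INR m) * theta n)) by ring.
      rewrite sin_neg.
      enough (0 <= sin ((INR t - INR m) * theta n)) by lra.
      apply sin_ge_0; nra. }
    pose proof (cos_div_cos2_le_sin (theta n / 2) M ltac:(lra) ltac:(unfold M; split; nra)).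
    replace (2 * (theta n / 2)) with (theta n) in * by field.
    nra.
Qed.

Lemma balance_even_le (t : Z) :
  balance n (IZR (2 * t) * theta n) <= balance n optimal_angle.
Proof.
  pose proof (Z.div_mod t (Z.of_nat n) ltac:(lia)) as Hdm.
  pose proof (Z.mod_pos_bound t (Z.of_nat n) ltac:(lia)) as Hb.
  set (q := (t / Z.of_nat n)%Z) in *. set (r := (t mod Z.of_nat n)%Z) in *.
  replace (IZR (2 * t) * theta n) with (IZR (2 * r) * theta n + IZR q * PI)
    by (rewrite Hdm, (PI_theta n) by lia; push_IZR; ring).
  rewrite balance_add_PI_mult.
  destruct (Z_le_gt_dec r (Z.of_nat h)).
  - replace (IZR (2 * r) * theta n) with (2 * INR (Z.to_nat r) * theta n)
      by (rewrite INR_IZR_INZ, Z2Nat.id by lia; push_IZR; ring).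
    apply balance_grid_le. lia.
  - replace (IZR (2 * r) * theta n) with (PI - 2 * INR (Z.to_nat (Z.of_nat n - r)) * theta n)
      by (rewrite INR_IZR_INZ, Z2Nat.id by lia; rewrite (PI_theta n) by lia; push_IZR; ring).
    rewrite balance_PI_sub. apply balance_grid_le. lia.
Qed.

Lemma balance_odd_le (t : Z) :
  Rabs (cos (IZR (2 * t + 1) * theta n)) / cos (theta n) + Rabs (sin (IZR (2 * t + 1) * theta n))
  <= balance n optimal_angle.
Proof.
  replace (IZR (2 * t + 1) * theta n) with (PI / 2 - IZR (2 * (Z.of_nat h - t)) * theta n)
    by (rewrite PI_theta_odd; push_IZR; field).
  rewrite cos_shift, sin_shift.
  pose proof (balance_even_le (Z.of_nat h - t)) as Hb. unfold balance in Hb |- *. lra.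
Qed.

Lemma alt_sum_pair_le (i j k l q q' : Z) :
  kappa n * (alt_sum (IZR (4 * i) * theta n) (IZR (4 * j) * theta n) (IZR (4 * k) * theta n)
               (IZR (4 * l) * theta n) (IZR (2 * q) * theta n)
             + alt_sum (IZR (4 * i) * theta n) (IZR (4 * j) * theta n) (IZR (4 * l) * theta n)
               (IZR (4 * k) * theta n) (IZR (2 * q') * theta n))
  <= 2 * balance n optimal_angle.
Proof.
  replace (IZR (2 * q) * theta n) with (2 * (IZR q * theta n)) by (push_IZR; ring).
  replace (IZR (2 * q') * theta n) with (2 * (IZR q' * theta n)) by (push_IZR; ring).
  rewrite alt_sum_pair.
  replace (IZR q * theta n - IZR q' * theta n) with (IZR (q - q') * theta n) by (push_IZR; ring).
  replace (IZR q * theta n + IZR q' * theta n) with (IZR (q + q') * theta n) by (push_IZR; ring).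
  pose proof kappa_pos.
  destruct (Z.Even_or_Odd (q + q')) as [[s E] | [s E]]; rewrite E.
  - pose proof (cos_diff_le_even s i j). pose proof (cos_diff_le_even s j i).
    pose proof (sin_diff_le_even s k l). pose proof (sin_diff_le_even s l k).
    refine (Rle_trans _ _ _ (scaled_pair_le (kappa n) _ _ _ _
              (1 + cos (2 * theta n)) (2 * cos (theta n)) _ _ _) _); [lra | lra | lra |].
    rewrite kappa_mul, kappa_mul_cos, Rmult_1_r.
    pose proof (balance_even_le (q - s)) as Hb.
    replace (2 * (q - s))%Z with (q - q')%Z in Hb by lia.
    unfold balance at 1 in Hb. unfold Rdiv in Hb. lra.
  - pose proof (cos_diff_le_odd s i j). pose proof (cos_diff_le_odd s j i).
    pose proof (sin_diff_le_odd s k l). pose proof (sin_diff_le_odd s l k).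
    refine (Rle_trans _ _ _ (scaled_pair_le (kappa n) _ _ _ _
              (2 * cos (theta n)) (1 + cos (2 * theta n)) _ _ _) _); [lra | lra | lra |].
    rewrite kappa_mul, kappa_mul_cos, Rmult_1_r.
    pose proof (balance_odd_le (q - s - 1)) as Hb.
    replace (2 * (q - s - 1) + 1)%Z with (q - q')%Z in Hb by lia. unfold Rdiv in Hb. lra.
Qed.

Lemma effects_alt_sum_le e f (i j k l : Z) :
  (forall a, 0 <= vertex_value n e a <= 1) -> (forall a, 0 <= vertex_value n f a <= 1) ->
  (vertex_value n e i + vertex_value n f i) - (vertex_value n e j + vertex_value n f j)
  + (vertex_value n e k - vertex_value n f k) - (vertex_value n e l - vertex_value n f l)
  <= 2 * balance n optimal_angle.
Proof.
  destruct e as [[e1 e2] e3], f as [[f1 f2] f3]. intros He Hf.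
  set (ci := cos (IZR (4 * i) * theta n)). set (si := sin (IZR (4 * i) * theta n)).
  set (cj := cos (IZR (4 * j) * theta n)). set (sj := sin (IZR (4 * j) * theta n)).
  set (ck := cos (IZR (4 * k) * theta n)). set (sk := sin (IZR (4 * k) * theta n)).
  set (cl := cos (IZR (4 * l) * theta n)). set (sl := sin (IZR (4 * l) * theta n)).
  destruct (effect_pairing_le e1 e2 e3 (ci - cj + ck - cl) (si - sj + sk - sl) He) as [q Hq].
  destruct (effect_pairing_le f1 f2 f3 (ci - cj + cl - ck) (si - sj + sl - sk) Hf) as [q' Hq'].
  pose proof (alt_sum_pair_le i j k l q q') as Hpair.
  rewrite !alt_sum_cos_sin in Hpair. fold ci si cj sj ck sk cl sl in Hpair.
  unfold vertex_value. fold ci si cj sj ck sk cl sl. lra.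
Qed.

Lemma Pbar_le_optimal M1p M1m M2p M2m : dichotomic n M1p M1m -> dichotomic n M2p M2m ->
  Pbar n M1p M1m M2p M2m <= / 4 * (2 + balance n optimal_angle).
Proof.
  intros D1 D2.
  assert (Hval : forall Mp Mm, dichotomic n Mp Mm ->
            (forall a, 0 <= vertex_value n Mp a <= 1) /\ (forall a, 0 <= vertex_value n Mm a <= 1)).
  { intros Mp Mm D. destruct D as [Hp [Hm _]].
    split; apply is_effect_iff; [lia | exact Hp | lia | exact Hm]. }
  destruct (Hval _ _ D1) as [H1p H1m], (Hval _ _ D2) as [H2p H2m].
  destruct (fnorm_vadd_effects n M1p M2p ltac:(lia) H1p H2p) as [i Hi].
  destruct (fnorm_vadd_effects n M1p M2m ltac:(lia) H1p H2m) as [k Hk].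
  destruct (fnorm_vadd_effects n M1m M2p ltac:(lia) H1m H2p) as [l Hl].
  destruct (fnorm_vadd_effects n M1m M2m ltac:(lia) H1m H2m) as [j Hj].
  rewrite !(dichotomic_value n M1p M1m _ D1), !(dichotomic_value n M2p M2m _ D2) in *.
  pose proof (effects_alt_sum_le M1p M2p i j k l H1p H2p).
  unfold Pbar. rewrite Hi, Hj, Hk, Hl. lra.
Qed.

(* [optimal_effect P] has its linear part at the vertex of direction [P] of the polygon of
   [effect_in_polygon]; the offset makes its vertex values fill [0, 1]. *)
Definition optimal_offset : R := if Z.even (Z.of_nat m) then 1 - kappa n else kappa n.

Definition optimal_effect (P : R) : vec3 :=
  (kappa n / rn n * cos P, kappa n / rn n * sin P, optimal_offset).

Lemma optimal_effect_value P a :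
  vertex_value n (optimal_effect P) a = kappa n * cos (IZR (4 * a) * theta n - P) + optimal_offset.
Proof. pose proof rn_pos. unfold vertex_value, optimal_effect. rewrite cos_minus. field. lra. Qed.

Lemma optimal_effect_bounds (N : Z) : Z.even N = Z.even (Z.of_nat m) ->
  forall a, 0 <= vertex_value n (optimal_effect (IZR (2 * N) * theta n)) a <= 1.
Proof.
  intros HN a. rewrite optimal_effect_value.
  replace (IZR (4 * a) * theta n - IZR (2 * N) * theta n) with (IZR (2 * (2 * a - N)) * theta n)
    by (push_IZR; ring).
  pose proof kappa_pos. pose proof kappa_mul.
  pose proof (COS_bound (IZR (2 * (2 * a - N)) * theta n)).
  unfold optimal_offset. rewrite <- HN.
  destruct (Z.even N) eqn:E.
  -     apply Z.even_spec in E. destruct E as [M ->].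
    pose proof (opp_cos_vertex_le (a - M)).
    replace (4 * (a - M))%Z with (2 * (2 * a - 2 * M))%Z in * by ring.
    split; nra.
  - assert (Hodd : Z.odd (2 * a - N) = true)
      by (rewrite Z.odd_sub, Z.odd_mul, <- (Z.negb_even N), E; reflexivity).
    pose proof (cos_twice_odd_mult_le n (2 * a - N) ltac:(lia) Hodd). split; nra.
Qed.

Lemma optimal_angle_bounds : 0 <= optimal_angle <= PI / 2.
Proof.
  pose proof theta_bounds. pose proof PI_theta_odd. pose proof m_bounds. pose proof (pos_INR m).
  split; nra.
Qed.

Lemma sin_vertex_m : sin (IZR (4 * Z.of_nat m) * theta n) = cos (theta n).
Proof.
  destruct m_spec as [E | E].
  - replace (IZR (4 * Z.of_nat m) * theta n) with (PI / 2 - theta n).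
    + apply sin_shift.
    + rewrite PI_theta_odd, E, mult_INR. push_IZR. simpl. field.
  - replace (IZR (4 * Z.of_nat m) * theta n) with (PI / 2 - - theta n).
    + rewrite sin_shift. apply cos_neg.
    + rewrite PI_theta_odd. push_IZR.
      replace (INR m) with ((INR h + 1) / 2)
        by (rewrite <- S_INR, <- Nat.add_1_r, E, mult_INR; simpl; field).
      field.
Qed.

Local Notation e_opt := (optimal_effect optimal_angle).
Local Notation f_opt := (optimal_effect (- optimal_angle)).

Lemma optimal_effects_bounds :
  (forall a, 0 <= vertex_value n e_opt a <= 1) /\
  (forall a, 0 <= vertex_value n f_opt a <= 1).
Proof.
  split.
  - replace optimal_angle with (IZR (2 * Z.of_nat m) * theta n) by (push_IZR; ring).
    apply optimal_effect_bounds. reflexivity.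
  - replace (- optimal_angle) with (IZR (2 * - Z.of_nat m) * theta n) by (push_IZR; ring).
    apply optimal_effect_bounds. rewrite Z.even_opp. reflexivity.
Qed.

Lemma optimal_effects_sum a :
  vertex_value n e_opt a + vertex_value n f_opt a
  = 2 * kappa n * cos optimal_angle * cos (IZR (4 * a) * theta n) + 2 * optimal_offset.
Proof. rewrite !optimal_effect_value, !cos_minus, cos_neg, sin_neg. ring. Qed.

Lemma optimal_effects_diff a :
  vertex_value n e_opt a - vertex_value n f_opt a
  = 2 * kappa n * sin optimal_angle * sin (IZR (4 * a) * theta n).
Proof. rewrite !optimal_effect_value, !cos_minus, cos_neg, sin_neg. ring. Qed.

Lemma optimal_coefficients_nonneg :
  0 <= kappa n * cos optimal_angle /\ 0 <= kappa n * sin optimal_angle.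
Proof.
  pose proof optimal_angle_bounds. pose proof PI_RGT_0. pose proof kappa_pos.
  split; apply Rmult_le_pos; try lra; [apply cos_ge_0 | apply sin_ge_0]; lra.
Qed.

Lemma optimal_fnorms_parallel :
  fnorm n (vadd e_opt f_opt) = 2 * kappa n * cos optimal_angle + 2 * optimal_offset /\
  fnorm n (vadd (complement e_opt) (complement f_opt))
    = 2 - 2 * optimal_offset + 2 * kappa n * cos optimal_angle * cos (2 * theta n).
Proof.
  destruct optimal_effects_bounds as [He Hf]. destruct optimal_coefficients_nonneg as [Hc _].
  pose proof (complement_bounds n _ He). pose proof (complement_bounds n _ Hf).
  split; apply fnorm_vadd_effects_eq; try lia; try assumption;
    [intros a | exists 0%Z | intros a | exists (Z.of_nat h + 1)%Z];
    rewrite ?vertex_value_complement; pose proof optimal_effects_sum as Hsum.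
  - rewrite Hsum. pose proof (COS_bound (IZR (4 * a) * theta n)).
    assert (0 <= kappa n * cos optimal_angle * (1 - cos (IZR (4 * a) * theta n)))
      by (apply Rmult_le_pos; lra).
    lra.
  - rewrite Hsum, Rmult_0_l, cos_0. ring.
  - pose proof (Hsum a). pose proof (opp_cos_vertex_le a).
    assert (0 <= kappa n * cos optimal_angle * (cos (2 * theta n) + cos (IZR (4 * a) * theta n)))
      by (apply Rmult_le_pos; lra).
    lra.
  - pose proof (Hsum (Z.of_nat h + 1)%Z).
    replace (IZR (4 * (Z.of_nat h + 1)) * theta n) with (2 * theta n + PI) in *
      by (rewrite PI_theta_odd; push_IZR; ring).
    rewrite neg_cos in *. lra.
Qed.

Lemma optimal_fnorms_crossed :
  fnorm n (vadd e_opt (complement f_opt)) = 1 + 2 * kappa n * sin optimal_angle * cos (theta n) /\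
  fnorm n (vadd (complement e_opt) f_opt) = 1 + 2 * kappa n * sin optimal_angle * cos (theta n).
Proof.
  destruct optimal_effects_bounds as [He Hf]. destruct optimal_coefficients_nonneg as [_ Hs].
  pose proof (complement_bounds n _ He). pose proof (complement_bounds n _ Hf).
  split; apply fnorm_vadd_effects_eq; try lia; try assumption;
    [intros a | exists (Z.of_nat m) | intros a | exists (- Z.of_nat m)%Z];
    rewrite ?vertex_value_complement; pose proof optimal_effects_diff as Hdiff.
  - pose proof (Hdiff a). pose proof (sin_vertex_le a).
    assert (0 <= kappa n * sin optimal_angle * (cos (theta n) - sin (IZR (4 * a) * theta n)))
      by (apply Rmult_le_pos; lra).
    lra.
  - pose proof (Hdiff (Z.of_nat m)). rewrite sin_vertex_m in *. lra.
  - pose proof (Hdiff a). pose proof (opp_sin_vertex_le a).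
    assert (0 <= kappa n * sin optimal_angle * (cos (theta n) + sin (IZR (4 * a) * theta n)))
      by (apply Rmult_le_pos; lra).
    lra.
  - pose proof (Hdiff (- Z.of_nat m)%Z).
    replace (IZR (4 * - Z.of_nat m) * theta n) with (- (IZR (4 * Z.of_nat m) * theta n)) in *
      by (push_IZR; ring).
    rewrite sin_neg, sin_vertex_m in *. lra.
Qed.

Lemma Pbar_optimal_attained : exists M1p M1m M2p M2m,
  dichotomic n M1p M1m /\ dichotomic n M2p M2m /\
  Pbar n M1p M1m M2p M2m = / 4 * (2 + balance n optimal_angle).
Proof.
  destruct optimal_effects_bounds as [He Hf].
  exists e_opt, (complement e_opt),
         f_opt, (complement f_opt).
  split; [|split]; try (apply dichotomic_complement; [lia | assumption]).
  destruct optimal_fnorms_parallel as [N1 N4], optimal_fnorms_crossed as [N2 N3].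
  unfold Pbar. rewrite N1, N2, N3, N4, balance_first_quadrant by exact optimal_angle_bounds.
  pose proof kappa_mul. pose proof kappa_mul_cos. pose proof cos_theta_pos.
  transitivity (/ 8 * (4 + 2 * cos optimal_angle * (kappa n * (1 + cos (2 * theta n)))
                      + 2 * sin optimal_angle * (kappa n * (2 * cos (theta n))))); [ring|].
  rewrite kappa_mul, kappa_mul_cos. field. lra.
Qed.

Lemma is_max_Pbar_odd :
  is_max_Pbar n (/ 4 * (2 + cos (INR m * PI / INR n)
                        + / cos (PI / (2 * INR n)) * sin (INR m * PI / INR n))).
Proof.
  replace (INR m * PI / INR n) with optimal_angle by (unfold theta; field; apply not_0_INR; lia).
  fold (theta n).
  replace (/ 4 * (2 + cos optimal_angle + / cos (theta n) * sin optimal_angle))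
    with (/ 4 * (2 + balance n optimal_angle))
    by (rewrite balance_first_quadrant by exact optimal_angle_bounds; unfold Rdiv; ring).
  split; [exact Pbar_optimal_attained | exact Pbar_le_optimal].
Qed.

End OddPolygon.

Theorem mainTheorem16 : forall m : nat, (1 <= m)%nat ->
  is_max_Pbar (4 * m + 1)
    (/ 4 * (2 + cos (INR m * PI / INR (4 * m + 1))
            + / cos (PI / (2 * INR (4 * m + 1))) * sin (INR m * PI / INR (4 * m + 1)))) /\
  is_max_Pbar (4 * m + 3)
    (/ 4 * (2 + cos (INR (m + 1) * PI / INR (4 * m + 3))
            + / cos (PI / (2 * INR (4 * m + 3))) * sin (INR (m + 1) * PI / INR (4 * m + 3)))).
Proof.
  intros m Hm. split.
  - replace (4 * m + 1)%nat with (2 * (2 * m) + 1)%nat by lia.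
    apply is_max_Pbar_odd; lia.
  - replace (4 * m + 3)%nat with (2 * (2 * m + 1) + 1)%nat by lia.
    apply is_max_Pbar_odd; lia.
Qed.
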